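(* Let $f:\Gamma_+\to\mathbb{R}$ be a smooth function which is homogeneous of degree one and monotone increasing. Then $f\in\mathcal{C}_n$ if and only if $f$ is concave and the function $f_{-1}(x_1,\dots,x_n)=\big(f(x_1^{-1},\dots,x_n^{-1})\big)^{-1}$ is concave on $\Gamma_+$.
   Context: $\Gamma_+=\{x\in\mathbb{R}^n: x_i>0\ \forall i\}$. $\mathcal{C}_n$ is the class of functions $f:\Gamma_+\to\mathbb{R}$ which are $C^\infty$, homogeneous of degree one ($f(cx)=cf(x)$ for $c>0$), strictly monotone increasing ($\partial f/\partial x_i>0$ for each $i$), concave, and inverse-concave, meaning $f^*(x_1,\dots,x_n)=-f(x_1^{-1},\dots,x_n^{-1})$ is concave on $\Gamma_+$. *)

From HB Require Import structures.
From mathcomp Require Import all_boot all_order all_algebra.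
From mathcomp Require Import all_classical all_reals all_analysis.
Set Implicit Arguments. Unset Strict Implicit. Unset Printing Implicit Defensive.
Import Order.TTheory GRing.Theory Num.Theory.
Import numFieldNormedType.Exports.
Local Open Scope classical_set_scope.
Local Open Scope ring_scope.

Section Defs.
Variables (R : realType) (n : nat).
Local Notation V := 'rV[R]_n.

Definition Gamma_plus : set V := [set x | forall i, 0 < x 0 i].

Definition ebasis (i : 'I_n) : V := delta_mx 0 i.

Definition vinv (x : V) : V := map_mx (fun a => a^-1) x.

Definition iter_deriv (vs : seq V) (g : V -> R) : V -> R :=
  foldr (fun v h => fun x => derive h x v) g vs.

Definition smooth_on (U : set V) (g : V -> R) : Prop :=
  forall vs : seq V, forall x, U x ->
    {for x, continuous (iter_deriv vs g)} /\
    (forall v, derivable (iter_deriv vs g) x v).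

Definition homogeneous1_on (U : set V) (g : V -> R) : Prop :=
  forall c x, 0 < c -> U x -> g (c *: x) = c * g x.

Definition strictly_increasing_on (U : set V) (g : V -> R) : Prop :=
  forall x, U x -> forall i, 0 < derive g x (ebasis i).

Definition concave_on (U : set V) (g : V -> R) : Prop :=
  forall x y (t : R), U x -> U y -> 0 <= t <= 1 ->
    (1 - t) * g x + t * g y <= g ((1 - t) *: x + t *: y).

Definition fstar (g : V -> R) : V -> R := fun x => - g (vinv x).

Definition fminus1 (g : V -> R) : V -> R := fun x => (g (vinv x))^-1.

Definition class_C (g : V -> R) : Prop :=
  [/\ smooth_on Gamma_plus g,
      homogeneous1_on Gamma_plus g,
      strictly_increasing_on Gamma_plus g,
      concave_on Gamma_plus g &
      concave_on Gamma_plus (fstar g)].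

End Defs.

(* Write g x := f (x^-1), so that f^* = -g and f_{-1} = 1/g.  A concave,
   strictly increasing, 1-homogeneous f is positive: doubling the coordinates
   of x one at a time strictly increases f, up to f (2 x) = 2 f x (concavity
   turns a positive directional derivative at the end of a segment into an
   increase along the segment).  Hence f_{-1} is positive and 1-homogeneous.
   If f_{-1} is concave, then so is f^* = -1/f_{-1}, because t |-> 1/t is
   convex and decreasing.  Conversely, a positive 1-homogeneous function h is
   concave as soon as the superlevel set {h >= 1} is convex, and for
   h = f_{-1} this set is {f^* >= -1}, a superlevel set of the concave
   function f^*. *)

From HB Require Import structures.
From mathcomp Require Import all_boot all_order all_algebra.
From mathcomp Require Import all_classical all_reals all_analysis.
From mathcomp Require Import ring lra.
Set Implicit Arguments. Unset Strict Implicit. Unset Printing Implicit Defensive.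
Import Order.TTheory GRing.Theory Num.Theory.
Import numFieldNormedType.Exports.
Local Open Scope ring_scope.

Lemma invr_conv_le (R : realFieldType) (a b t : R) :
  0 < a -> 0 < b -> 0 <= t <= 1 ->
  ((1 - t) * a + t * b)^-1 <= (1 - t) / a + t / b.
Proof.
move=> a0 b0 /andP[t0 t1]; set m := (1 - t) * a + t * b.
have m0 : 0 < m by rewrite /m; nra.
have -> : (1 - t) / a + t / b = m^-1 + t * (1 - t) * (a - b) ^+ 2 / (a * b * m).
  by rewrite /m; field; rewrite -/m !gt_eqF.
rewrite lerDl; apply: divr_ge0; last by rewrite ltW ?mulr_gt0.
by rewrite mulr_ge0 ?sqr_ge0 // mulr_ge0 ?subr_ge0.
Qed.

Lemma exists_gt_of_derive_gt0 (R : realType) (V : normedModType R) (f : V -> R) z v :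
  derivable f z v -> 0 < derive f z v -> exists2 h, 0 < h & f z < f (h *: v + z).
Proof.
move=> /cvg_dnbhs_at_right df df_gt0.
have [h [quot_gt0 h_gt0]] := filter_ex (filterI (cvgr_gt _ df _ df_gt0) (nbhs_right_gt 0)).
exists h => //; move: quot_gt0 => /=.
by rewrite pmulr_rgt0 ?invr_gt0 // subr_gt0.
Qed.

(* For positive 1-homogeneous h this says exactly that {h >= 1} is convex. *)
Definition ge1_on_level1_chords (R : realType) (n : nat) (U : set 'rV[R]_n)
    (h : 'rV[R]_n -> R) : Prop :=
  forall x y t, U x -> U y -> h x = 1 -> h y = 1 -> 0 <= t <= 1 ->
    1 <= h ((1 - t) *: x + t *: y).

Section ConcaveReciprocal.
Variables (R : realType) (n : nat) (U : set 'rV[R]_n) (h : 'rV[R]_n -> R).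
Hypothesis U_convex : forall x y t, U x -> U y -> 0 <= t <= 1 ->
  U ((1 - t) *: x + t *: y).
Hypothesis h_gt0 : forall x, U x -> 0 < h x.

Lemma concave_neg_inv : concave_on U h -> concave_on U (fun x => - (h x)^-1).
Proof.
move=> h_cc x y t Ux Uy t01; rewrite !mulrN -opprD lerN2.
apply: (le_trans _ (invr_conv_le (h_gt0 Ux) (h_gt0 Uy) t01)).
have [[hx_gt0 hy_gt0] Uz] := (h_gt0 Ux, h_gt0 Uy, U_convex Ux Uy t01).
rewrite lef_pV2 ?posrE ?h_gt0 ?h_cc //.
by case/andP: t01 => t0 t1; nra.
Qed.

Lemma ge1_on_level1_chords_of_concave_neg_inv :
  concave_on U (fun x => - (h x)^-1) -> ge1_on_level1_chords U h.
Proof.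
move=> cc x y t Ux Uy hx1 hy1 t01.
have := cc x y t Ux Uy t01; rewrite /= hx1 hy1 invr1 -mulrDl subrK mul1r lerN2.
by rewrite invf_le1 // (h_gt0 (U_convex Ux Uy t01)).
Qed.

Hypothesis U_cone : forall c x, 0 < c -> U x -> U (c *: x).

Lemma concave_of_ge1_on_level1_chords :
  homogeneous1_on U h -> ge1_on_level1_chords U h -> concave_on U h.
Proof.
move=> h_hom h_lvl x y t Ux Uy /andP[t0 t1].
have [p_gt0 q_gt0] := (h_gt0 Ux, h_gt0 Uy).
set p := h x in p_gt0 *; set q := h y in q_gt0 *.
set S := (1 - t) * p + t * q.
have S_gt0 : 0 < S by rewrite /S; nra.
set mu := t * q / S.
have mu01 : 0 <= mu <= 1.
  rewrite divr_ge0 ?mulr_ge0 ?(ltW q_gt0) ?(ltW S_gt0) //= ler_pdivrMr // mul1r /S lerDr.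
  by rewrite mulr_ge0 ?subr_ge0 // ltW.
have [Ux' Uy'] : U (p^-1 *: x) /\ U (q^-1 *: y).
  by split; apply: U_cone; rewrite ?invr_gt0.
have unit_level z : U z -> h ((h z)^-1 *: z) = 1.
  by move=> Uz; rewrite h_hom ?invr_gt0 ?h_gt0 // mulVf // gt_eqF ?h_gt0.
have -> : (1 - t) *: x + t *: y = S *: ((1 - mu) *: (p^-1 *: x) + mu *: (q^-1 *: y)).
  apply/rowP => j; rewrite /mu !mxE.
  by rewrite /S; field; rewrite -/S !gt_eqF.
have Uw := U_convex Ux' Uy' mu01.
rewrite h_hom // ler_pMr //.
exact: h_lvl (unit_level _ Ux) (unit_level _ Uy) mu01.
Qed.

End ConcaveReciprocal.

Lemma concave_lt_of_derive_gt0 (R : realType) (n : nat) (U : set 'rV[R]_n)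
    (f : 'rV[R]_n -> R) (y v : 'rV[R]_n) (s : R) :
  concave_on U f -> U y -> (forall h, 0 <= h -> U (h *: v + y)) -> 0 < s ->
  derivable f (s *: v + y) v -> 0 < derive f (s *: v + y) v ->
  f y < f (s *: v + y).
Proof.
move=> f_cc Uy U_ray s_gt0 df df_gt0.
have [h h_gt0] := exists_gt_of_derive_gt0 df df_gt0.
rewrite addrA -scalerDl (addrC h) => fz_lt_fw.
have sh_gt0 : 0 < s + h by rewrite addr_gt0.
set t := s / (s + h).
have [t_gt0 t_lt1] : 0 < t /\ t < 1.
  by rewrite divr_gt0 // ltr_pdivrMr // mul1r ltrDl.
have t01 : 0 <= t <= 1 by rewrite !ltW.
have := f_cc _ _ t Uy (U_ray _ (ltW sh_gt0)) t01.
have -> : (1 - t) *: y + t *: ((s + h) *: v + y) = s *: v + y.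
  by apply/rowP => j; rewrite /t !mxE; field; rewrite gt_eqF.
have : t * f (s *: v + y) < t * f ((s + h) *: v + y) by rewrite ltr_pM2l.
move=> *; nra.
Qed.

Section PositiveCone.
Variables (R : realType) (n : nat).
Local Notation V := 'rV[R]_n.
Local Notation GP := (@Gamma_plus R n).
Local Notation e := (@ebasis R n).

Lemma Gamma_plus_conv (x y : V) t :
  GP x -> GP y -> 0 <= t <= 1 -> GP ((1 - t) *: x + t *: y).
Proof.
move=> Gx Gy /andP[t0 t1] j; rewrite !mxE.
by have := Gx j; have := Gy j => *; nra.
Qed.

Lemma Gamma_plus_scale c (x : V) : 0 < c -> GP x -> GP (c *: x).
Proof. by move=> c_gt0 Gx j; rewrite mxE mulr_gt0. Qed.

Lemma Gamma_plus_vinv (x : V) : GP x -> GP (vinv x).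
Proof. by move=> Gx j; rewrite mxE invr_gt0. Qed.

Lemma Gamma_plus_ray (x : V) i h : GP x -> 0 <= h -> GP (h *: e i + x).
Proof.
by move=> Gx h_ge0 j; rewrite !mxE ltr_pwDr // mulr_ge0 // ler0n.
Qed.

Definition row_prefix (d : V) (k : nat) : V :=
  \row_j (if (j < k)%N then d 0 j else 0).

Lemma row_prefix0 d : row_prefix d 0 = 0.
Proof. by apply/rowP => j; rewrite !mxE. Qed.

Lemma row_prefix_full d : row_prefix d n = d.
Proof. by apply/rowP => j; rewrite mxE ltn_ord. Qed.

Lemma row_prefixS d k (lt_kn : (k < n)%N) :
  row_prefix d k.+1 = d 0 (Ordinal lt_kn) *: e (Ordinal lt_kn) + row_prefix d k.
Proof.
apply/rowP => j; rewrite !mxE eqxx -val_eqE /= ltnS.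
case: (ltngtP j k) => [_|_|eq_jk]; rewrite ?mulr0 ?add0r ?addr0 //.
by rewrite mulr1; congr (d 0 _); apply: val_inj.
Qed.

Lemma Gamma_plus_prefix (x d : V) k : GP x -> GP d -> GP (row_prefix d k + x).
Proof.
move=> Gx Gd j; rewrite !mxE; case: ifP => _; last by rewrite add0r.
by rewrite addr_gt0.
Qed.

Variable f : V -> R.
Hypotheses (f_cc : concave_on GP f) (f_incr : strictly_increasing_on GP f).
Hypothesis f_derivable : forall x i, GP x -> derivable f x (e i).

Lemma concave_increasing_lt (x d : V) :
  (0 < n)%N -> GP x -> GP d -> f x < f (d + x).
Proof.
move=> n_gt0 Gx Gd.
have step k (lt_kn : (k < n)%N) :
    f (row_prefix d k + x) < f (row_prefix d k.+1 + x).
  have Gk := Gamma_plus_prefix k Gx Gd.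
  rewrite row_prefixS -addrA; apply: (concave_lt_of_derive_gt0 f_cc) => //.
  - by move=> h h_ge0; exact: Gamma_plus_ray.
  - exact/f_derivable/Gamma_plus_ray/ltW.
  - exact/f_incr/Gamma_plus_ray/ltW.
have chain k : (k < n)%N -> f x < f (row_prefix d k.+1 + x).
  elim: k => [|k IH] lt_kn; last exact: lt_trans (IH (ltnW lt_kn)) (step _ lt_kn).
  by have := step _ lt_kn; rewrite row_prefix0 add0r.
by have := chain n.-1; rewrite prednK // row_prefix_full; apply.
Qed.

Lemma concave_increasing_hom1_gt0 (x : V) :
  homogeneous1_on GP f -> (0 < n)%N -> GP x -> 0 < f x.
Proof.
move=> f_hom n_gt0 Gx; have := concave_increasing_lt n_gt0 Gx Gx.
by rewrite -mulr2n -scaler_nat f_hom // => *; lra.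
Qed.

End PositiveCone.

Section Reciprocal.
Variables (R : realType) (n : nat) (f : 'rV[R]_n -> R).
Local Notation GP := (@Gamma_plus R n).

Lemma vinvZ c (x : 'rV[R]_n) : vinv (c *: x) = c^-1 *: vinv x.
Proof. by apply/rowP => j; rewrite !mxE invfM. Qed.

Lemma fminus1_gt0 x : (forall y, GP y -> 0 < f y) -> GP x -> 0 < fminus1 f x.
Proof. by move=> f_gt0 Gx; rewrite invr_gt0; apply/f_gt0/Gamma_plus_vinv. Qed.

Lemma homogeneous1_fminus1 : homogeneous1_on GP f -> homogeneous1_on GP (fminus1 f).
Proof.
move=> f_hom c x c_gt0 Gx.
have Gv := Gamma_plus_vinv Gx.
by rewrite /fminus1 vinvZ f_hom ?invr_gt0 // invfM invrK.
Qed.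

Lemma fstar_fminus1 : fstar f = fun x => - (fminus1 f x)^-1.
Proof. by apply/funext => x; rewrite /fminus1 invrK. Qed.

End Reciprocal.

Lemma smooth_on_derivable (R : realType) (n : nat) (U : set 'rV[R]_n) f x v :
  smooth_on U f -> U x -> derivable f x v.
Proof. by move=> f_smooth Ux; exact: (f_smooth [::] x Ux).2. Qed.

Lemma concave_on_rV0 (R : realType) (U : set 'rV[R]_0) (f : 'rV[R]_0 -> R) :
  concave_on U f.
Proof.
move=> x y t _ _ _.
by rewrite (thinmx0 x) (thinmx0 y) (thinmx0 (_ + _)) -mulrDl subrK mul1r.
Qed.

Theorem corollary2p4 (R : realType) (n : nat) (f : 'rV[R]_n -> R) :
  smooth_on (@Gamma_plus R n) f ->
  homogeneous1_on (@Gamma_plus R n) f ->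
  strictly_increasing_on (@Gamma_plus R n) f ->
  (class_C f <->
   concave_on (@Gamma_plus R n) f /\ concave_on (@Gamma_plus R n) (fminus1 f)).
Proof.
case: n f => [|n] f f_smooth f_hom f_incr.
  by split=> [[*] | [*]]; split=> //; exact: concave_on_rV0.
have [GP_conv GP_scale] := (@Gamma_plus_conv R n.+1, @Gamma_plus_scale R n.+1).
have f1_hom := homogeneous1_fminus1 f_hom.
have f1_gt0 : concave_on (@Gamma_plus R n.+1) f -> forall x, Gamma_plus x -> 0 < fminus1 f x.
  move=> f_cc x; apply: fminus1_gt0 => y Gy.
  apply: concave_increasing_hom1_gt0 => // z i Gz.
  exact: smooth_on_derivable f_smooth Gz.
split=> [[_ _ _ f_cc fstar_cc] | [f_cc f1_cc]]; split=> //.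
  apply: (concave_of_ge1_on_level1_chords GP_conv (f1_gt0 f_cc) GP_scale f1_hom).
  apply: (ge1_on_level1_chords_of_concave_neg_inv GP_conv (f1_gt0 f_cc)).
  by rewrite -fstar_fminus1.
by rewrite fstar_fminus1; exact: (concave_neg_inv GP_conv (f1_gt0 f_cc)).
Qed.
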